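(* Let $(E_n)_{n\in\mathbb Z}$ be the integer sequence with $E_0=0$, $E_1=E_2=1$ and $E_n+E_{n+2}=E_{n+3}$ for all $n\in\mathbb Z$, and for $i,j\in\mathbb Z$ let $\Delta_{i,j}=E_iE_{i+j-1}-E_{i+j}E_{i-1}$. Then: (a) for every fixed $i\in\mathbb Z$, $\Delta_{i,j-3}+\Delta_{i,j-1}=\Delta_{i,j}$ for all $j\in\mathbb Z$, with $\Delta_{i,1}=E_i^2-E_{i-1}E_{i+1}$, $\Delta_{i,2}=E_iE_{i+1}-E_{i-1}E_{i+2}$, $\Delta_{i,3}=E_iE_{i+2}-E_{i-1}E_{i+3}$, and $\Delta_{i,2}=\Delta_{i,3}$; (b) for every fixed $j\in\mathbb Z$, $\Delta_{i+2,j}+\Delta_{i,j}=\Delta_{i-1,j}$ for all $i\in\mathbb Z$, with $\Delta_{1,j}=E_j$, $\Delta_{2,j}=-E_{j-1}$, $\Delta_{3,j}=-E_j$.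
   Context: $\Delta_{i,j}$ equals the determinant $\det\begin{pmatrix}E_n & E_{n-1} & E_{n+1}\\ E_{n+i} & E_{n+i-1} & E_{n+i+1}\\ E_{n+i+j} & E_{n+i+j-1} & E_{n+i+j+1}\end{pmatrix}$ for any $n\in\mathbb Z$. *)

From Stdlib Require Import ZArith Lia.
Open Scope Z_scope.

Definition Delta (E : Z -> Z) (i j : Z) : Z :=
  E i * E (i + j - 1) - E (i + j) * E (i - 1).

(* Δ_{i,j} is the 3×3 determinant with rows (E_m, E_{m-1}, E_{m+1}) for m = n, n+i, n+i+j,
   whatever n is: for n = 0 the first row is (0, 0, 1) and the determinant reduces to the
   2×2 minor Δ_{i,j}, and shifting all three indices by one turns the columns (c1, c2, c3)
   into (c3, c1, c3 + c2), because E_{m+2} = E_{m+1} + E_{m-1}; this preserves the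
   determinant.  Since every column obeys the recurrence, the determinant is
   linear-recurrent in each row index; taking n = -i makes the first row the only one
   depending on i, which gives (b). *)

From Stdlib Require Import ZArith Lia.
Open Scope Z_scope.

(* The determinant with rows (E m, E (m - 1), E (m + 1)) for m = p, q, r,
   expanded along the first row. *)
Definition Edet (E : Z -> Z) (p q r : Z) : Z :=
  E p * (E (q - 1) * E (r + 1) - E (q + 1) * E (r - 1))
  - E (p - 1) * (E q * E (r + 1) - E (q + 1) * E r)
  + E (p + 1) * (E q * E (r - 1) - E (q - 1) * E r).

Section Recurrence.

Variable E : Z -> Z.
Hypothesis E_rec : forall n : Z, E n + E (n + 2) = E (n + 3).

Lemma E_rec_at (a b c : Z) : b = a + 2 -> c = a + 3 -> E c = E a + E b.
Proof. intros -> ->. now rewrite E_rec. Qed.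

Lemma Edet_shift1 (p q r : Z) : Edet E (p + 1) (q + 1) (r + 1) = Edet E p q r.
Proof.
  unfold Edet. rewrite !Z.add_simpl_r.
  rewrite (E_rec_at (p - 1) (p + 1) (p + 1 + 1)) by lia.
  rewrite (E_rec_at (q - 1) (q + 1) (q + 1 + 1)) by lia.
  rewrite (E_rec_at (r - 1) (r + 1) (r + 1 + 1)) by lia.
  ring.
Qed.

Lemma Edet_shift (k p q r : Z) : Edet E (p + k) (q + k) (r + k) = Edet E p q r.
Proof.
  revert p q r. induction k as [| k IHk | k IHk] using Z.peano_ind; intros p q r.
  - now rewrite !Z.add_0_r.
  - rewrite <- (IHk p q r), <- (Edet_shift1 (p + k)).
    f_equal; lia.
  - rewrite <- (IHk p q r), <- (Edet_shift1 (p + Z.pred k)).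
    f_equal; lia.
Qed.

Lemma Edet_rec_l (p q r : Z) : Edet E (p + 3) q r = Edet E (p + 2) q r + Edet E p q r.
Proof.
  unfold Edet.
  rewrite (E_rec_at p (p + 2) (p + 3)) by lia.
  rewrite (E_rec_at (p - 1) (p + 2 - 1) (p + 3 - 1)) by lia.
  rewrite (E_rec_at (p + 1) (p + 2 + 1) (p + 3 + 1)) by lia.
  ring.
Qed.

Lemma Delta_rec_r (i j : Z) : Delta E i (j - 3) + Delta E i (j - 1) = Delta E i j.
Proof.
  unfold Delta.
  rewrite (E_rec_at (i + (j - 3) - 1) (i + (j - 1) - 1) (i + j - 1)) by lia.
  rewrite (E_rec_at (i + (j - 3)) (i + (j - 1)) (i + j)) by lia.
  replace (i + (j - 3) - 1 + 2) with (i + (j - 1) - 1) by ring.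
  ring.
Qed.

Lemma Delta_2_3_r (i : Z) : Delta E i 2 = Delta E i 3.
Proof.
  unfold Delta.
  replace (i + 2 - 1) with (i + 1) by ring. replace (i + 3 - 1) with (i + 2) by ring.
  rewrite (E_rec_at i (i + 2) (i + 3)) by lia.
  rewrite (E_rec_at (i - 1) (i + 1) (i + 2)) by lia.
  ring.
Qed.

Hypotheses (E0 : E 0 = 0) (E1 : E 1 = 1) (E2 : E 2 = 1).

Lemma E_neg1 : E (-1) = 0.
Proof. pose proof (E_rec (-1)) as H. simpl in H. lia. Qed.

Lemma Delta_Edet (n i j : Z) : Delta E i j = Edet E n (n + i) (n + i + j).
Proof.
  replace (Edet E n (n + i) (n + i + j)) with (Edet E (0 + n) (i + n) (i + j + n))
    by (f_equal; ring).
  rewrite Edet_shift.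
  unfold Edet, Delta. change (0 - 1) with (-1). change (0 + 1) with 1.
  rewrite E_neg1, E0, E1.
  ring.
Qed.

Lemma Delta_rec_l (i j : Z) : Delta E (i + 2) j + Delta E i j = Delta E (i - 1) j.
Proof.
  set (p := - i - 2).
  rewrite (Delta_Edet p), (Delta_Edet (p + 2)), (Delta_Edet (p + 3)).
  replace (p + (i + 2)) with 0 by (unfold p; ring).
  replace (p + 2 + i) with 0 by (unfold p; ring).
  replace (p + 3 + (i - 1)) with 0 by (unfold p; ring).
  rewrite Edet_rec_l. ring.
Qed.

Lemma Delta_1_l (j : Z) : Delta E 1 j = E j.
Proof.
  unfold Delta. replace (1 + j - 1) with j by ring. change (1 - 1) with 0.
  rewrite E0, E1. ring.
Qed.

Lemma Delta_2_l (j : Z) : Delta E 2 j = - E (j - 1).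
Proof.
  unfold Delta. change (2 - 1) with 1. rewrite E1, E2.
  rewrite (E_rec_at (j - 1) (2 + j - 1) (2 + j)) by lia.
  ring.
Qed.

Lemma Delta_3_l (j : Z) : Delta E 3 j = - E j.
Proof.
  unfold Delta. change (3 - 1) with 2. rewrite E2.
  rewrite (E_rec_at 0 2 3), E0, E2 by lia.
  rewrite (E_rec_at j (3 + j - 1) (3 + j)) by lia.
  ring.
Qed.

End Recurrence.

Theorem theorem16 (E : Z -> Z)
  (h0 : E 0 = 0) (h1 : E 1 = 1) (h2 : E 2 = 1)
  (hrec : forall n : Z, E n + E (n + 2) = E (n + 3)) :
  (forall i : Z,
     (forall j : Z, Delta E i (j - 3) + Delta E i (j - 1) = Delta E i j)
     /\ Delta E i 1 = E i ^ 2 - E (i - 1) * E (i + 1)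
     /\ Delta E i 2 = E i * E (i + 1) - E (i - 1) * E (i + 2)
     /\ Delta E i 3 = E i * E (i + 2) - E (i - 1) * E (i + 3)
     /\ Delta E i 2 = Delta E i 3)
  /\
  (forall j : Z,
     (forall i : Z, Delta E (i + 2) j + Delta E i j = Delta E (i - 1) j)
     /\ Delta E 1 j = E j
     /\ Delta E 2 j = - E (j - 1)
     /\ Delta E 3 j = - E j).
Proof.
  split; intro k; repeat split.
  - intro j. now apply Delta_rec_r.
  - unfold Delta. rewrite Z.add_simpl_r. ring.
  - unfold Delta. replace (k + 2 - 1) with (k + 1) by ring. ring.
  - unfold Delta. replace (k + 3 - 1) with (k + 2) by ring. ring.
  - now apply Delta_2_3_r.
  - intro i. now apply Delta_rec_l.
  - now apply Delta_1_l.
  - now apply Delta_2_l.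
  - now apply Delta_3_l.
Qed.
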